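(* For every formula $\varphi$ of $\mathcal L^{\bigcirc}_\square$ the following are equivalent: (i) $\varphi$ is derivable in $\mathbf{GLH}$; (ii) $\varphi$ is valid on every finite invertible dynamic $\mathbf{GL}$ frame; (iii) $\varphi$ is valid, with respect to the $d$-semantics, on every invertible dynamic topological system $\langle X,\tau,f\rangle$ with $X$ finite and $\langle X,\tau\rangle$ scattered.
   Context: Language $\mathcal L^{\bigcirc}_\square$: $\varphi::= p\mid \varphi\wedge\varphi\mid\neg\varphi\mid\square\varphi\mid\bigcirc\varphi$, $p$ ranging over a fixed non-empty set $\mathsf{PV}$. Axioms and rules: Taut; K: $\square(\varphi\to\psi)\to(\square\varphi\to\square\psi)$; 4: $\square\varphi\to\square\square\varphi$; L: $\square(\square\varphi\to\varphi)\to\square\varphi$; ${\rm Next}_\neg$: $\neg\bigcirc\varphi\leftrightarrow\bigcirc\neg\varphi$; ${\rm Next}_\wedge$: $\bigcirc(\varphi\wedge\psi)\leftrightarrow\bigcirc\varphi\wedge\bigcirc\psi$; H: $\square\bigcirc\varphi\leftrightarrow\bigcirc\square\varphi$; rules modus ponens, ${\rm Nec}_\square$, ${\rm Nec}_\bigcirc$. $\mathbf{GLH}$ is axiomatised by Taut, K, 4, L, ${\rm Next}_\neg$, ${\rm Next}_\wedge$, H, closed under these rules. An invertible dynamic $\mathbf{GL}$ frame is $\langle W,\sqsubset,f\rangle$ with $W$ non-empty, $\sqsubset$ transitive and converse well-founded (for finite $W$: transitive and irreflexive), and $f\colon W\to W$ a bijection such that $w\sqsubset v$ iff $f(w)\sqsubset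 f(v)$. Kripke truth: $w\models\square\varphi$ iff $v\models\varphi$ for all $v$ with $w\sqsubset v$; $w\models\bigcirc\varphi$ iff $f(w)\models\varphi$. A space is scattered if for every $S\subseteq X$, $S\subseteq d(S)$ implies $S=\varnothing$, where $d(A)$ is the set of $x$ in the closure of $A\setminus\{x\}$. An invertible DTS is $\langle X,\tau,f\rangle$ with $f$ a homeomorphism. $d$-semantics: $\|p\|=\nu(p)$, Boolean clauses set-theoretic, $\|\square\varphi\|=X\setminus d(\|\neg\varphi\|)$, $\|\bigcirc\varphi\|=f^{-1}(\|\varphi\|)$. Validity means truth everywhere under every valuation. *)

From mathcomp Require Import all_boot.
Set Implicit Arguments. Unset Strict Implicit. Unset Printing Implicit Defensive.

Inductive form (PV : Type) : Type :=
| Var : PV -> form PV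
| And : form PV -> form PV -> form PV
| Neg : form PV -> form PV
| Box : form PV -> form PV
| Next : form PV -> form PV.
Arguments Var {PV} _.
Arguments And {PV} _ _.
Arguments Neg {PV} _.
Arguments Box {PV} _.
Arguments Next {PV} _.

Definition Imp {PV} (a b : form PV) : form PV := Neg (And a (Neg b)).
Definition Iff {PV} (a b : form PV) : form PV := And (Imp a b) (Imp b a).

(* ---------- Tautologies: true under every Boolean valuation of formulas
   (i.e. treating variables, □-formulas and ○-formulas as atoms);
   these are exactly the substitution instances of propositional tautologies ---------- *)
Definition bool_val {PV} (v : form PV -> bool) : Prop :=
  (forall a b, v (And a b) = v a && v b) /\ (forall a, v (Neg a) = ~~ v a).

Definition taut {PV} (phi : form PV) : Prop :=
  forall v : form PV -> bool, bool_val v -> v phi = true.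

Inductive GLH {PV : Type} : form PV -> Prop :=
| GLH_taut phi : taut phi -> GLH phi
| GLH_K phi psi : GLH (Imp (Box (Imp phi psi)) (Imp (Box phi) (Box psi)))
| GLH_4 phi : GLH (Imp (Box phi) (Box (Box phi)))
| GLH_L phi : GLH (Imp (Box (Imp (Box phi) phi)) (Box phi))
| GLH_Next_neg phi : GLH (Iff (Neg (Next phi)) (Next (Neg phi)))
| GLH_Next_and phi psi : GLH (Iff (Next (And phi psi)) (And (Next phi) (Next psi)))
| GLH_H phi : GLH (Iff (Box (Next phi)) (Next (Box phi)))
| GLH_MP phi psi : GLH (Imp phi psi) -> GLH phi -> GLH psi
| GLH_Nec_box phi : GLH phi -> GLH (Box phi)
| GLH_Nec_next phi : GLH phi -> GLH (Next phi).

Fixpoint ksat {PV} {W : Type} (R : W -> W -> bool) (f : W -> W)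
  (V : PV -> W -> bool) (w : W) (phi : form PV) : Prop :=
  match phi with
  | Var p => V p w = true
  | And a b => ksat R f V w a /\ ksat R f V w b
  | Neg a => ~ ksat R f V w a
  | Box a => forall v, R w v -> ksat R f V v a
  | Next a => ksat R f V (f w) a
  end.

Definition fin_inv_dyn_GL_frame (W : finType) (R : rel W) (f : W -> W) : Prop :=
  (0 < #|W|)%N /\ transitive R /\ irreflexive R /\ bijective f /\
  (forall w v, R w v = R (f w) (f v)).

Definition kvalid {PV} (W : finType) (R : rel W) (f : W -> W) (phi : form PV) : Prop :=
  forall (V : PV -> W -> bool) (w : W), ksat R f V w phi.

Definition is_topology (X : finType) (op : pred {set X}) : Prop :=
  op set0 /\ op setT /\
  (forall A B, op A -> op B -> op (A :&: B)) /\
  (forall F : {set {set X}}, (forall A, A \in F -> op A) -> op (\bigcup_(A in F) A)).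

Definition tclosure (X : finType) (op : pred {set X}) (A : {set X}) : {set X} :=
  [set x | [forall U : {set X}, (op U && (x \in U)) ==> [exists y, (y \in U) && (y \in A)]]].

Definition derived (X : finType) (op : pred {set X}) (A : {set X}) : {set X} :=
  [set x | x \in tclosure op (A :\ x)].

Definition scattered (X : finType) (op : pred {set X}) : Prop :=
  forall S : {set X}, S \subset derived op S -> S = set0.

Definition homeomorphism (X : finType) (op : pred {set X}) (f : X -> X) : Prop :=
  bijective f /\ (forall U, op U -> op (f @^-1: U)) /\ (forall U, op U -> op (f @: U)).

Fixpoint dsem {PV} (X : finType) (op : pred {set X}) (f : X -> X)
  (nu : PV -> {set X}) (phi : form PV) : {set X} :=
  match phi with
  | Var p => nu p
  | And a b => dsem op f nu a :&: dsem op f nu b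
  | Neg a => ~: dsem op f nu a
  | Box a => ~: derived op (~: dsem op f nu a)
  | Next a => f @^-1: dsem op f nu a
  end.

Definition dvalid {PV} (X : finType) (op : pred {set X}) (f : X -> X) (phi : form PV) : Prop :=
  forall nu : PV -> {set X}, dsem op f nu phi = setT.

(* Soundness is routine; Löb's axiom holds because on a finite strict order every
   refuted formula has a maximal refutation.
   For completeness, the axioms Next_neg, Next_and and H let us push every [Next] of a
   formula down to its variables, so a non-theorem of GLH becomes a Next-free non-theorem
   of GL over the variables [PV * nat], the variable [(p, k)] standing for [Next^k p].
   The finite canonical model of GL over its subformulas refutes it; the product of that
   model with a cycle longer than the Next-depth of the formula, the dynamics rotating the
   cycle, is a finite invertible dynamic GL frame refuting the original formula.
   Finally, a finite scattered space induces the strict specialisation order, a finite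
   strict order induces the topology of up-sets, and in both cases the derived set of [A]
   consists of the points having a successor in [A]; so d-semantics is Kripke semantics
   and homeomorphisms are exactly the order automorphisms. *)

From mathcomp Require Import all_boot boolp.
From Stdlib Require List.
Set Implicit Arguments. Unset Strict Implicit. Unset Printing Implicit Defensive.

Local Notation In := List.In.

Ltac taut_solve :=
  rewrite /taut /Imp /Iff;
  let v := fresh "v" in let v_and := fresh "v_and" in let v_neg := fresh "v_neg" in
  move=> v [v_and v_neg]; rewrite ?(v_and, v_neg);
  repeat match goal with |- context [v ?x] => case: (v x) end.

Record normal_GL {A : Type} (P : form A -> Prop) : Prop := {
  GL_taut a : taut a -> P a;
  GL_MP a b : P (Imp a b) -> P a -> P b;
  GL_K a b : P (Imp (Box (Imp a b)) (Imp (Box a) (Box b)));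
  GL_4 a : P (Imp (Box a) (Box (Box a)));
  GL_L a : P (Imp (Box (Imp (Box a) a)) (Box a));
  GL_nec a : P a -> P (Box a) }.

Section NormalGL.
Variables (A : Type) (P : form A -> Prop).
Hypothesis PGL : normal_GL P.
Implicit Types a b c d e : form A.

Lemma taut_MP a b : taut (Imp a b) -> P a -> P b.
Proof. by move=> /(GL_taut PGL); apply: GL_MP. Qed.

Lemma taut_MP2 a b c : taut (Imp a (Imp b c)) -> P a -> P b -> P c.
Proof. by move=> /taut_MP H /H; apply: GL_MP. Qed.

Lemma taut_MP3 a b c d : taut (Imp a (Imp b (Imp c d))) -> P a -> P b -> P c -> P d.
Proof. by move=> /taut_MP2 H /H{}H /H{}H /(GL_MP PGL H). Qed.

Lemma taut_MP4 a b c d e :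
  taut (Imp a (Imp b (Imp c (Imp d e)))) -> P a -> P b -> P c -> P d -> P e.
Proof. by move=> /taut_MP2 H /H{}H /H{}H /(GL_MP PGL H){}H /(GL_MP PGL H). Qed.

Lemma imp_trans a b c : P (Imp a b) -> P (Imp b c) -> P (Imp a c).
Proof. by apply: taut_MP2; taut_solve. Qed.

Lemma box_mono a b : P (Imp a b) -> P (Imp (Box a) (Box b)).
Proof. by move=> /(GL_nec PGL); apply: GL_MP (GL_K PGL _ _). Qed.

Lemma box_cong a b : P (Iff a b) -> P (Iff (Box a) (Box b)).
Proof.
move=> Hab; have /box_mono Hl : P (Imp a b) by apply: taut_MP Hab; taut_solve.
have /box_mono Hr : P (Imp b a) by apply: taut_MP Hab; taut_solve.
by move: Hl Hr; apply: taut_MP2; taut_solve.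
Qed.
End NormalGL.

Lemma GLH_normal {PV : Type} : normal_GL (@GLH PV).
Proof.
by split; [exact: GLH_taut|exact: GLH_MP|exact: GLH_K|exact: GLH_4|exact: GLH_L
  |exact: GLH_Nec_box].
Qed.

Section NextModality.
Variable PV : Type.
Implicit Types a b : form PV.

Lemma next_mono a b : GLH (Imp a b) -> GLH (Imp (Next a) (Next b)).
Proof.
move=> /GLH_Nec_next Hab.
have Hneg := GLH_Next_neg (And a (Neg b)).
have Hand := GLH_Next_and a (Neg b).
have Hnegb := GLH_Next_neg b.
by move: Hab Hneg Hand Hnegb; apply: (taut_MP4 GLH_normal); taut_solve.
Qed.

Lemma next_cong a b : GLH (Iff a b) -> GLH (Iff (Next a) (Next b)).
Proof.
move=> Hab; have /next_mono Hl : GLH (Imp a b) by apply: (taut_MP GLH_normal) Hab; taut_solve.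
have /next_mono Hr : GLH (Imp b a) by apply: (taut_MP GLH_normal) Hab; taut_solve.
by move: Hl Hr; apply: (taut_MP2 GLH_normal); taut_solve.
Qed.

Definition nexts (k : nat) a : form PV := iter k Next a.

Lemma nexts_and k a b : GLH (Iff (nexts k (And a b)) (And (nexts k a) (nexts k b))).
Proof.
elim: k => [|k IH]; first by apply: GLH_taut; taut_solve.
move: (next_cong IH) (GLH_Next_and (nexts k a) (nexts k b)).
by apply: (taut_MP2 GLH_normal); taut_solve.
Qed.

Lemma nexts_neg k a : GLH (Iff (nexts k (Neg a)) (Neg (nexts k a))).
Proof.
elim: k => [|k IH]; first by apply: GLH_taut; taut_solve.
by move: (next_cong IH) (GLH_Next_neg (nexts k a)); apply: (taut_MP2 GLH_normal); taut_solve.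
Qed.

Lemma nexts_box k a : GLH (Iff (nexts k (Box a)) (Box (nexts k a))).
Proof.
elim: k => [|k IH]; first by apply: GLH_taut; taut_solve.
by move: (next_cong IH) (GLH_H (nexts k a)); apply: (taut_MP2 GLH_normal); taut_solve.
Qed.

Fixpoint push_next (k : nat) a : form (PV * nat) :=
  match a with
  | Var p => Var (p, k)
  | And a b => And (push_next k a) (push_next k b)
  | Neg a => Neg (push_next k a)
  | Box a => Box (push_next k a)
  | Next a => push_next k.+1 a
  end.

Fixpoint unfold_vars (a : form (PV * nat)) : form PV :=
  match a with
  | Var pk => nexts pk.2 (Var pk.1)
  | And a b => And (unfold_vars a) (unfold_vars b)
  | Neg a => Neg (unfold_vars a)
  | Box a => Box (unfold_vars a)
  | Next a => Next (unfold_vars a)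
  end.

Lemma GLH_push_next k a : GLH (Iff (nexts k a) (unfold_vars (push_next k a))).
Proof.
elim: a k => [p|a IHa b IHb|a IH|a IH|a IH] k /=.
- by apply: GLH_taut; taut_solve.
- by move: (nexts_and k a b) (IHa k) (IHb k); apply: (taut_MP3 GLH_normal); taut_solve.
- by move: (nexts_neg k a) (IH k); apply: (taut_MP2 GLH_normal); taut_solve.
- by move: (nexts_box k a) (box_cong GLH_normal (IH k)); apply: (taut_MP2 GLH_normal); taut_solve.
- by rewrite /nexts -iterSr; exact: (IH k.+1).
Qed.

Lemma taut_unfold_vars (a : form (PV * nat)) : taut a -> taut (unfold_vars a).
Proof. by move=> Ha v [v_and v_neg]; apply: (Ha (v \o unfold_vars)); split => * /=. Qed.

Lemma unfold_vars_normal : normal_GL (fun a : form (PV * nat) => GLH (unfold_vars a)).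
Proof.
split.
- by move=> a /taut_unfold_vars /GLH_taut.
- by move=> a b /=; apply: GLH_MP.
- by move=> a b; apply: GLH_K.
- by move=> a; apply: GLH_4.
- by move=> a; apply: GLH_L.
- by move=> a; apply: GLH_Nec_box.
Qed.
End NextModality.

Lemma all_In (T : Type) (v : pred T) (l : seq T) : all v l <-> (forall x, In x l -> v x).
Proof.
elim: l => [|y l IH] //=; split.
- by move=> /andP [vy /IH vl] x [<-|/vl].
- by move=> Hl; rewrite Hl /=; [apply/IH => x Hx; apply: Hl; right|left].
Qed.

Section Consistency.
Variables (A : Type) (P : form A -> Prop) (t : form A).
Hypothesis PGL : normal_GL P.
Implicit Types (a : form A) (l m : seq (form A)).

(* There are no constants in the language, so the empty conjunction is [Imp t t]. *)
Definition bigAnd l : form A := foldr And (Imp t t) l.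

Definition consistent l := ~ P (Neg (bigAnd l)).

Definition lit (b : bool) a := if b then a else Neg a.

Definition lits (bs : seq bool) (s : seq (form A)) := [seq lit p.1 p.2 | p <- zip bs s].

Lemma lit_val v b a : bool_val v -> v (lit b a) -> b = v a.
Proof. by move=> [_ v_neg]; case: b => /= [->|]; rewrite ?v_neg; case: (v a). Qed.

Lemma lits_In v bs s a : size bs = size s -> In a s -> bool_val v -> all v (lits bs s) ->
  In (lit (v a) a) (lits bs s).
Proof.
elim: s bs => [|c s IH] [|b bs] //= [Hsize] Ha Hv /andP [vb Hall].
case: Ha => [<-|Ha]; last by right; apply: IH.
by left; rewrite -(lit_val Hv vb).
Qed.

Lemma bigAnd_val v l : bool_val v -> v (bigAnd l) = all v l.
Proof.
move=> [v_and v_neg]; elim: l => [|a l IH] /=; last by rewrite v_and IH.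
by rewrite /Imp v_neg v_and v_neg; case: (v t).
Qed.

Local Ltac bigAnd_taut :=
  let v := fresh "v" in let Hv := fresh "Hv" in
  move=> v Hv; rewrite /Iff /Imp !(proj2 Hv, proj1 Hv, bigAnd_val) //=;
  rewrite ?(all_cat, all_rcons) /= ?(proj2 Hv, proj1 Hv);
  repeat match goal with
  | |- context [v ?x] => case: (v x)
  | |- context [all v ?l] => case: (all v l)
  end.

Lemma taut_bigAnd_sub l m : (forall a, In a m -> In a l) -> taut (Imp (bigAnd l) (bigAnd m)).
Proof.
move=> Hml v Hv; rewrite /Imp (proj2 Hv) (proj1 Hv) (proj2 Hv) !bigAnd_val //.
by apply/negP => /andP [/all_In Hl /negP]; apply; apply/all_In => a /Hml /Hl.
Qed.

Lemma consistent_sat l : consistent l -> exists2 v, bool_val v & all v l.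
Proof.
move=> Hl; apply: contrapT => Hno; apply/Hl/(GL_taut PGL) => v Hv.
by rewrite (proj2 Hv) bigAnd_val //; apply/negP => Hall; apply: Hno; exists v.
Qed.

Lemma consistent_sub l m : (forall a, In a m -> In a l) -> consistent l -> consistent m.
Proof.
move=> /taut_bigAnd_sub/(GL_taut PGL) Hlm Hl Hm; apply: Hl; move: Hlm Hm.
by apply: (taut_MP2 PGL); taut_solve.
Qed.

Lemma consistent_lit l a : consistent l -> exists b, consistent (rcons l (lit b a)).
Proof.
move=> Hl; apply: contrapT => Hno; apply: Hl.
have Hb b : P (Neg (bigAnd (rcons l (lit b a)))) by apply: contrapT => Hb; apply: Hno; exists b.
by move: (Hb true) (Hb false); apply: (taut_MP2 PGL); bigAnd_taut.
Qed.

Lemma lindenbaum l s : consistent l ->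
  exists2 bs : seq bool, size bs = size s & consistent (l ++ lits bs s).
Proof.
elim: s l => [|a s IH] l Hl; first by exists [::]; rewrite // cats0.
have [b /IH [bs Hsize Hbs]] := consistent_lit a Hl.
by exists (b :: bs); rewrite /= ?Hsize // -cat_rcons.
Qed.

Lemma bigAnd_box l : P (Imp (bigAnd (map Box l)) (Box (bigAnd l))).
Proof.
elim: l => [|a l IH] /=.
  have /(GL_nec PGL) : P (Imp t t) by apply: (GL_taut PGL); taut_solve.
  by apply: (taut_MP PGL); taut_solve.
have Hpair : P (Box (Imp a (Imp (bigAnd l) (And a (bigAnd l))))).
  by apply/(GL_nec PGL)/(GL_taut PGL); taut_solve.
move: Hpair (GL_K PGL a (Imp (bigAnd l) (And a (bigAnd l))))
  (GL_K PGL (bigAnd l) (And a (bigAnd l))) IH.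
by apply: (taut_MP4 PGL); taut_solve.
Qed.

Lemma bigAnd_map_imp (g h : form A -> form A) l :
  (forall a, P (Imp (g a) (h a))) -> P (Imp (bigAnd (map g l)) (bigAnd (map h l))).
Proof.
move=> Hgh; elim: l => [|a l IH] /=; first by apply: (GL_taut PGL); taut_solve.
by move: (Hgh a) IH; apply: (taut_MP2 PGL); taut_solve.
Qed.

(* The modal core of the existence lemma for the canonical model, where [l] collects the
   [b] with [Box b] true in a world refuting [Box a]; it is Löb's axiom that is needed. *)
Lemma consistent_box_witness l a :
  consistent (map Box l ++ [:: Neg (Box a)]) ->
  consistent ((l ++ map Box l) ++ [:: Box a; Neg a]).
Proof.
move=> Hl Hinc; apply: Hl; set D := l ++ map Box l.
have D_loeb : P (Imp (bigAnd D) (Imp (Box a) a)).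
  by move: Hinc; apply: (taut_MP PGL); bigAnd_taut.
have boxl_boxD : P (Imp (bigAnd (map Box l)) (bigAnd (map Box D))).
  have := bigAnd_map_imp (g := Box) (h := Box \o Box) l (GL_4 PGL).
  by rewrite /D map_cat -map_comp; apply: (taut_MP PGL); bigAnd_taut.
have := imp_trans PGL (imp_trans PGL boxl_boxD (bigAnd_box D)) (box_mono PGL D_loeb).
move=> /(imp_trans PGL)/(_ (GL_L PGL a)).
by apply: (taut_MP PGL); bigAnd_taut.
Qed.
End Consistency.

Fixpoint subf {A : Type} (a : form A) : seq (form A) :=
  a :: match a with
       | Var _ => [::]
       | And b c => subf b ++ subf c
       | Neg b | Box b | Next b => subf b
       end.

Fixpoint next_free {A : Type} (a : form A) : Prop :=
  match a with
  | Var _ => True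
  | And b c => next_free b /\ next_free c
  | Neg b | Box b => next_free b
  | Next _ => False
  end.

Lemma subf_refl (A : Type) (a : form A) : In a (subf a).
Proof. by case: a => *; left. Qed.

Lemma subf_trans (A : Type) (a b c : form A) : In b (subf a) -> In c (subf b) -> In c (subf a).
Proof.
elim: a => [p|a1 IH1 a2 IH2|a1 IH|a1 IH|a1 IH] /=; case=> [<- //|Hb Hc]; right => //;
  try exact: IH.
have [Hb1|Hb2] := List.in_app_or _ _ _ Hb; apply/List.in_or_app.
- by left; apply: IH1.
- by right; apply: IH2.
Qed.

Section SubformulaClosure.
Variables (A : Type) (a : form A).

Lemma subf_And b c : In (And b c) (subf a) -> In b (subf a) /\ In c (subf a).
Proof.
move=> Hbc; split; apply: (subf_trans Hbc); right; apply/List.in_or_app.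
- by left; apply: subf_refl.
- by right; apply: subf_refl.
Qed.

Lemma subf_Neg b : In (Neg b) (subf a) -> In b (subf a).
Proof. by move=> Hb; apply: (subf_trans Hb); right; apply: subf_refl. Qed.

Lemma subf_Box b : In (Box b) (subf a) -> In b (subf a).
Proof. by move=> Hb; apply: (subf_trans Hb); right; apply: subf_refl. Qed.
End SubformulaClosure.

Lemma next_free_subf (A : Type) (a b : form A) : next_free a -> In b (subf a) -> next_free b.
Proof.
elim: a => [p|a1 IH1 a2 IH2|a1 IH|a1 IH|a1 IH] //=; first by move=> _ [<-|].
- move=> [N1 N2] [<-|Hb]; first by split.
  by case: (List.in_app_or _ _ _ Hb); [apply: IH1|apply: IH2].
- by move=> N [<-|]; last apply: IH.
- by move=> N [<-|]; last apply: IH.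
Qed.

Lemma push_next_free (PV : Type) k (a : form PV) : next_free (push_next k a).
Proof. by elim: a k => //= b IHb c IHc k; split. Qed.

Section CanonicalModel.
Variables (A : Type) (P : form A -> Prop) (psi : form A).
Hypothesis PGL : normal_GL P.
Local Notation Sg := (subf psi).
Local Notation consistent := (consistent P psi).

(* A world is a choice of truth values for the subformulas of [psi]; the consistent
   choices play the role of maximal consistent subsets of the closure. *)
Definition world : finType := (size Sg).-tuple bool.

Definition world_lits (X : world) := lits X Sg.

(* Junk when [X] is inconsistent. *)
Definition val (X : world) : form A -> bool :=
  if pselect (exists2 v, bool_val v & all v (world_lits X)) is left ex then s2val (cid2 ex)
  else fun _ => false.

Lemma val_spec X : consistent (world_lits X) -> bool_val (val X) /\ all (val X) (world_lits X).
Proof.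
move=> /(consistent_sat PGL) HX; rewrite /val; case: pselect => // ex.
by case: (cid2 ex).
Qed.

Lemma val_lit X a : consistent (world_lits X) -> In a Sg -> In (lit (val X a) a) (world_lits X).
Proof. by move=> /val_spec [Hv Hall] Ha; apply: lits_In; rewrite ?size_tuple. Qed.

Lemma val_unique X v a : consistent (world_lits X) -> bool_val v -> all v (world_lits X) ->
  In a Sg -> val X a = v a.
Proof. by move=> HX Hv /all_In Hall /(val_lit HX) /Hall; apply: lit_val. Qed.

Lemma extend_world l : consistent l -> exists2 Y : world, consistent (world_lits Y) &
  exists2 v, bool_val v & all v l /\ forall a, In a Sg -> val Y a = v a.
Proof.
move=> /(lindenbaum PGL Sg) [bs /eqP Hsize Hbs]; pose Y : world := Tuple Hsize.
have HY : consistent (world_lits Y).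
  by apply: (consistent_sub PGL) Hbs => a Ha; apply/List.in_or_app; right.
have [v Hv] := consistent_sat PGL Hbs; rewrite all_cat => /andP [Hl HlY].
by exists Y => //; exists v => //; split => // a; apply: val_unique.
Qed.

(* The witness clause makes the relation irreflexive, as a GL frame requires. *)
Definition canon_rel (X Y : world) : bool := `[< consistent (world_lits X) /\
  consistent (world_lits Y) /\
  (forall b, In (Box b) Sg -> val X (Box b) -> val Y b /\ val Y (Box b)) /\
  (exists2 b, In (Box b) Sg & val Y (Box b) && ~~ val X (Box b)) >].

Lemma canon_rel_trans : transitive canon_rel.
Proof.
move=> Y X Z /asboolP [HX [_ [HXY [b Hb /andP [HYb HXb]]]]] /asboolP [_ [HZ [HYZ _]]].
apply/asboolP; split=> //; split=> //; split.
  by move=> c Hc /(HXY c Hc) [_ /(HYZ c Hc)].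
by exists b => //; rewrite HXb (proj2 (HYZ b Hb HYb)).
Qed.

Lemma canon_rel_irr : irreflexive canon_rel.
Proof. by move=> X; apply/asboolP => [[_ [_ [_ [b _ /andP [-> //]]]]]]. Qed.

Definition canon_val (p : A) (X : world) : bool := val X (Var p).

Definition boxed_true (v : form A -> bool) (s : seq (form A)) : seq (form A) :=
  pmap (fun a => if a is Box b then (if v a then Some b else None) else None) s.

Lemma In_boxed_true v s b : In b (boxed_true v s) <-> In (Box b) s /\ v (Box b).
Proof.
elim: s => [|a s IH]; first by split=> [|[]].
case: a => [p|a1 a2|a1|a1|a1] /=; rewrite ?IH;
  try by split=> [[? ?]|[[? | ?] ?]]; [split; [right|] | congruence | split].
case Va1: (v (Box a1)) => /=; rewrite ?IH; split.
- by case=> [<-|[Hb vb]]; split=> //; [left|right].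
- by case=> [[E|Hb] vb]; [left; congruence|right].
- by case=> Hb vb; split=> //; right.
- by case=> [[E|Hb] vb] //; move: Va1; rewrite E vb.
Qed.

Lemma canon_box_witness X a : consistent (world_lits X) -> In (Box a) Sg ->
  val X (Box a) = false -> exists2 Y, canon_rel X Y & val Y a = false.
Proof.
move=> HX Ha Xa; set B := boxed_true (val X) Sg.
have /(consistent_box_witness PGL) HB : consistent (map Box B ++ [:: Neg (Box a)]).
  move: (HX); apply: (consistent_sub PGL) => c Hc; case: (List.in_app_or _ _ _ Hc).
  - case/List.in_map_iff => b [<- /In_boxed_true [Hb Xb]].
    by move: (val_lit HX Hb); rewrite Xb.
  - by case=> [<-|[]]; move: (val_lit HX Ha); rewrite Xa.
have [Y HY [v Hv [/all_In Hl EY]]] := extend_world HB.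
have In_l c : In c (B ++ map Box B) \/ In c [:: Box a; Neg a] -> v c.
  by move=> Hc; apply/Hl/List.in_or_app.
exists Y; last first.
  rewrite (EY _ (subf_Box Ha)); apply: negbTE; rewrite -(proj2 Hv).
  by apply: In_l; right; right; left.
apply/asboolP; split=> //; split=> //; split.
  move=> b Hb Xb; have HbB : In b B by apply/In_boxed_true.
  rewrite (EY _ Hb) (EY _ (subf_Box Hb)).
  by split; apply: In_l; left; apply/List.in_or_app; [left|right; apply: List.in_map].
by exists a => //; rewrite Xa (EY _ Ha) andbT; apply: In_l; right; left.
Qed.

Lemma canon_truth X a : next_free psi -> consistent (world_lits X) -> In a Sg ->
  ksat canon_rel id canon_val X a <-> val X a.
Proof.
move=> Npsi; elim: a X => [p|b IHb c IHc|b IH|b IH|b IH] X HX Ha /=;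
  have [[val_and val_neg] _] := val_spec HX.
- by [].
- have [Hb Hc] := subf_And Ha; rewrite val_and IHb // IHc //.
  by split=> [[-> ->]|/andP].
- rewrite val_neg (IH _ HX (subf_Neg Ha)).
  by case: (val X b); split.
- split=> [Hbox|Xb Y].
  + apply: contrapT => /negP/negbTE /(canon_box_witness HX Ha) [Y XY Yb].
    have HY : consistent (world_lits Y) by case/asboolP: XY => _ [].
    by move: (Hbox Y XY); rewrite (IH _ HY (subf_Box Ha)) Yb.
  + case/asboolP => _ [HY [XY _]]; rewrite (IH _ HY (subf_Box Ha)).
    by case: (XY b Ha Xb).
- by have := next_free_subf Npsi Ha.
Qed.

Lemma canon_countermodel : next_free psi -> ~ P psi ->
  exists X : world, ~ ksat canon_rel id canon_val X psi.
Proof.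
move=> Npsi Hpsi.
have Hneg : consistent [:: Neg psi].
  by move=> H; apply: Hpsi; move: H; apply: (taut_MP PGL); rewrite /bigAnd /=; taut_solve.
have [X HX [v Hv [/andP [vpsi _] EX]]] := extend_world Hneg.
exists X; rewrite (canon_truth Npsi HX (subf_refl psi)) (EX _ (subf_refl psi)).
by move: vpsi; rewrite (proj2 Hv) => /negbTE ->.
Qed.
End CanonicalModel.

Lemma strict_order_maximal (W : finType) (R : rel W) (Q : W -> Prop) :
  transitive R -> irreflexive R -> forall u, ~ Q u ->
  exists m, [/\ m = u \/ R u m, ~ Q m & forall z, R m z -> Q z].
Proof.
move=> Rtr Rirr u Qu.
pose S := [pred z | `[< ~ Q z >] && ((z == u) || R u z)].
have Su : S u by rewrite /= eqxx orTb andbT; apply/asboolP.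
case: (arg_minnP (fun z => #|[set y | R z y]|) Su) => m /andP [/asboolP Qm um] Hmin.
exists m; split=> //; first by case/orP: um => [/eqP ->|]; [left|right].
move=> z Rmz; apply: contrapT => Qz.
have Sz : S z.
  rewrite /= (asboolT Qz) /=; apply/orP; right.
  by case/orP: um => [/eqP <- //|/Rtr]; apply.
have := Hmin z Sz; apply/negP; rewrite -ltnNge; apply: proper_card; apply/properP; split.
  by apply/subsetP => y; rewrite !inE; apply: Rtr.
by exists z; rewrite !inE ?Rmz ?Rirr.
Qed.

Section KripkeConnectives.
Context {PV W : Type} {R : W -> W -> bool} {f : W -> W} {V : PV -> W -> bool} {w : W}.
Local Notation sat := (ksat R f V w).

Lemma ksat_Imp {a b : form PV} : sat (Imp a b) <-> (sat a -> sat b).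
Proof. by split=> [H Ha|H [Ha Hb]]; [apply: contrapT => Hb; apply: H|apply/Hb/H]. Qed.

Lemma ksat_Iff {a b : form PV} : sat (Iff a b) <-> (sat a <-> sat b).
Proof. by split=> [[/ksat_Imp H1 /ksat_Imp H2]|[H1 H2]]; split=> //; apply/ksat_Imp. Qed.

Lemma ksat_taut (a : form PV) : taut a -> sat a.
Proof.
move=> Ha; apply/asboolP; apply: (Ha (fun b => `[< ksat R f V w b >])).
by split=> * /=; rewrite (asbool_and, asbool_neg).
Qed.
End KripkeConnectives.

Section KripkeSoundness.
Variables (PV : Type) (W : finType) (R : rel W) (f : W -> W).
Hypothesis HW : fin_inv_dyn_GL_frame R f.

Lemma ksat_L V w (a : form PV) : ksat R f V w (Imp (Box (Imp (Box a) a)) (Box a)).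
Proof.
have [_ [Rtr [Rirr _]]] := HW.
apply/ksat_Imp => Hloeb v Rwv; apply: contrapT => Hv.
have [m [vm Hm Hmax]] := strict_order_maximal (Q := fun x => ksat R f V x a) Rtr Rirr Hv.
have Rwm : R w m by case: vm => [->|/(Rtr _ _ _ Rwv)].
have Hloeb_m : ksat R f V m (Imp (Box a) a) := Hloeb m Rwm.
by apply: Hm; move/ksat_Imp: Hloeb_m; apply.
Qed.

Lemma GLH_sound (phi : form PV) : GLH phi -> kvalid R f phi.
Proof.
have [_ [Rtr [_ [[g fK gK] Rf]]]] := HW.
elim=> {phi} [a Ha|a b|a|a|a|a b|a|a b _ IHab _ IHa|a _ IHa|a _ IHa] V w.
- exact: ksat_taut.
- apply/ksat_Imp => Hab; apply/ksat_Imp => Ha v Rwv.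
  by move/ksat_Imp: (Hab v Rwv); apply; apply: Ha.
- by apply/ksat_Imp => Ha v Rwv u Rvu; apply: Ha (Rtr _ _ _ Rwv Rvu).
- exact: ksat_L.
- by apply/ksat_Iff.
- by apply/ksat_Iff.
- apply/ksat_Iff; split=> /= Hbox u Ru.
  + by rewrite -[u]gK; apply: Hbox; rewrite Rf gK.
  + by apply: Hbox; rewrite -Rf.
- by move/ksat_Imp: (IHab V w); apply.
- by move=> v _; apply: IHa.
- exact: IHa.
Qed.
End KripkeSoundness.

Fixpoint next_depth {A : Type} (a : form A) : nat :=
  match a with
  | Var _ => 0
  | And b c => maxn (next_depth b) (next_depth c)
  | Neg b | Box b => next_depth b
  | Next b => (next_depth b).+1
  end.

(* The product of a GL frame with the cycle [Z/(N+1)Z], the dynamics being the rotation of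
   the second factor; it simulates [N] steps of [Next] on a static frame. *)
Section CyclicProduct.
Variables (PV : Type) (W : finType) (R : rel W) (N : nat).

Definition cyc_rel (p q : W * 'I_N.+1) : bool := R p.1 q.1 && (p.2 == q.2).

Definition cyc_shift (p : W * 'I_N.+1) : W * 'I_N.+1 := (p.1, ordS p.2).

Lemma cyc_frame : (0 < #|W|)%N -> transitive R -> irreflexive R ->
  fin_inv_dyn_GL_frame cyc_rel cyc_shift.
Proof.
move=> /card_gt0P [x _] Rtr Rirr; split; first by apply/card_gt0P; exists (x, ord0).
split.
  move=> [y j] [x' i] [z k] /andP [/= Rxy /eqP ->] /andP [/= Ryz /eqP ->].
  by rewrite /cyc_rel /= (Rtr _ _ _ Rxy Ryz) eqxx.
split; first by move=> [x' i]; rewrite /cyc_rel /= Rirr.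
split.
  exists (fun p => (p.1, ord_pred p.2)) => [[x' i]|[x' i]];
  by rewrite /cyc_shift /= ?ordSK ?ord_predK.
by move=> [x' i] [y j]; rewrite /cyc_rel /cyc_shift /= (inj_eq (@ordS_inj _)).
Qed.

Variable V : PV * nat -> W -> bool.

Definition cyc_val (p : PV) (q : W * 'I_N.+1) : bool := V (p, nat_of_ord q.2) q.1.

Lemma ksat_cyc (a : form PV) (i : 'I_N.+1) x : (i + next_depth a <= N)%N ->
  ksat cyc_rel cyc_shift cyc_val (x, i) a <-> ksat R id V x (push_next i a).
Proof.
elim: a i x => [p|a IHa b IHb|a IH|a IH|a IH] i x /= Hi.
- by [].
- by rewrite IHa ?IHb //; apply: leq_trans Hi; rewrite leq_add2l ?leq_maxl ?leq_maxr.
- by rewrite IH.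
- split=> [H y Ry|H [y j] /andP [/= Ry /eqP <-]].
  + by rewrite -IH //; apply: H; rewrite /cyc_rel /= Ry eqxx.
  + by rewrite IH //; apply: H.
- have Hi1 : (i.+1 < N.+1)%N by rewrite ltnS; apply: leq_trans Hi; rewrite -addn1 leq_add2l.
  have -> : cyc_shift (x, i) = (x, Ordinal Hi1).
    by congr pair; apply: val_inj; rewrite /= modn_small.
  by rewrite IH //= addSnnS.
Qed.
End CyclicProduct.

Lemma GLH_complete (PV : Type) (phi : form PV) :
  (forall (W : finType) (R : rel W) (f : W -> W), fin_inv_dyn_GL_frame R f -> kvalid R f phi) ->
  GLH phi.
Proof.
move=> Hvalid; apply: contrapT => Hphi.
pose psi := push_next 0 phi; pose P (a : form (PV * nat)) := GLH (unfold_vars a).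
have Hpsi : ~ P psi.
  move=> H; apply: Hphi; move: (GLH_push_next 0 phi) H.
  by apply: (taut_MP2 GLH_normal); taut_solve.
have [X HX] := canon_countermodel (unfold_vars_normal PV) (push_next_free 0 phi) Hpsi.
have W_gt0 : (0 < #|world psi|)%N by apply/card_gt0P; exists X.
have Hframe := cyc_frame (next_depth phi) W_gt0
  (@canon_rel_trans _ P psi) (@canon_rel_irr _ P psi).
by apply/HX/(@ksat_cyc _ _ _ (next_depth phi) _ _ ord0); last exact: Hvalid _ _ _ Hframe _ _.
Qed.

Lemma dsem_ksat (PV : Type) (X : finType) (op : pred {set X}) (f : X -> X) (R : rel X)
    (nu : PV -> {set X}) (V : PV -> X -> bool) :
  (forall A, derived op A = [set x | [exists y, (y \in A) && R x y]]) ->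
  (forall p x, (x \in nu p) = V p x) ->
  forall a x, x \in dsem op f nu a <-> ksat R f V x a.
Proof.
move=> Hd HV; elim=> [p|a IHa b IHb|a IH|a IH|a IH] x /=.
- by rewrite HV.
- by rewrite inE -IHa -IHb; split=> [/andP|[-> ->]].
- by rewrite inE -IH; case: (x \in dsem op f nu a); split.
- rewrite Hd !inE; split.
  + by move=> /existsPn H y Rxy; apply/IH; move: (H y); rewrite Rxy inE andbT negbK.
  + move=> H; apply/existsPn => y; rewrite inE; case Rxy: (R x y); rewrite ?andbF // andbT negbK.
    by apply/IH/H.
- by rewrite inE IH.
Qed.

Section SpecializationOrder.
Variables (X : finType) (op : pred {set X}).
Hypotheses (Htop : is_topology op) (Hsc : scattered op).

Definition spec_rel (x y : X) : bool :=
  (x != y) && [forall U : {set X}, (op U && (x \in U)) ==> (y \in U)].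

Lemma derived_spec A : derived op A = [set x | [exists y, (y \in A) && spec_rel x y]].
Proof.
have [_ [opT [opI _]]] := Htop.
apply/setP => x; rewrite /derived /tclosure !inE; apply/idP/idP.
- move/forallP => H.
  pose Ux := \bigcap_(U | op U && (x \in U)) U.
  have Uo : op Ux by apply: (big_ind (fun U => op U)) => // U /andP [].
  have xU : x \in Ux by apply/bigcapP => U /andP [].
  have := H Ux; rewrite Uo xU /= => /existsP [y /andP [yU]]; rewrite !inE => /andP [yx yA].
  apply/existsP; exists y; rewrite yA /spec_rel eq_sym yx /=.
  by apply/forallP => U; apply/implyP => HUx; move/bigcapP: yU; apply.
- move=> /existsP [y /andP [yA /andP [xy /forallP HUy]]].
  apply/forallP => U; apply/implyP => HU; apply/existsP; exists y.
  by rewrite (implyP (HUy U) HU) !inE yA eq_sym xy.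
Qed.

Lemma spec_rel_asym x y : spec_rel x y -> ~~ spec_rel y x.
Proof.
move=> Rxy; apply/negP => Ryx.
have Hxy : [set x; y] \subset derived op [set x; y].
  rewrite derived_spec; apply/subsetP => z; rewrite !inE => /orP [] /eqP ->; apply/existsP.
  - by exists y; rewrite !inE eqxx orbT.
  - by exists x; rewrite !inE eqxx.
by move: (Hsc Hxy) => /setP /(_ x); rewrite !inE eqxx.
Qed.

Lemma spec_frame f : (0 < #|X|)%N -> homeomorphism op f -> fin_inv_dyn_GL_frame spec_rel f.
Proof.
move=> X_gt0 [f_bij [f_pre f_img]]; split=> //; split.
  move=> y x z Rxy Ryz; apply/andP; split.
    by apply: contraTneq Rxy => ->; apply: spec_rel_asym.
  apply/forallP => U; apply/implyP => HU; apply: (implyP (forallP (proj2 (andP Ryz)) U)).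
  by rewrite (implyP (forallP (proj2 (andP Rxy)) U) HU) andbT; case/andP: HU.
split; first by move=> x; rewrite /spec_rel eqxx.
split=> // x y; rewrite /spec_rel (inj_eq (bij_inj f_bij)); congr (_ && _).
apply/forallP/forallP => H U; apply/implyP => /andP [oU xU].
- by have := implyP (H (f @^-1: U)); rewrite !inE f_pre //; apply.
- have f_inj := bij_inj f_bij.
  by have := implyP (H (f @: U)); rewrite f_img // !mem_imset //; apply.
Qed.
End SpecializationOrder.

Section UpsetTopology.
Variables (W : finType) (R : rel W).
Hypotheses (Rtr : transitive R) (Rirr : irreflexive R).

Definition up_open (U : {set W}) : bool :=
  [forall x, forall y, (x \in U) && R x y ==> (y \in U)].

Lemma up_openP (U : {set W}) : reflect (forall x y, x \in U -> R x y -> y \in U) (up_open U).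
Proof.
apply: (iffP forallP) => [H x y xU Rxy|H x].
  by move/forallP: (H x) => /(_ y) /implyP; apply; rewrite xU Rxy.
by apply/forallP => y; apply/implyP => /andP [xU Rxy]; apply: H xU Rxy.
Qed.

Lemma up_open_topology : is_topology up_open.
Proof.
split; first by apply/up_openP => x y; rewrite inE.
split; first by apply/up_openP => x y; rewrite inE.
split.
  move=> A B /up_openP HA /up_openP HB; apply/up_openP => x y; rewrite !inE => /andP [xA xB] Rxy.
  by rewrite (HA x y) ?(HB x y).
move=> F HF; apply/up_openP => x y /bigcupP [A AF xA] Rxy; apply/bigcupP; exists A => //.
by move/up_openP: (HF A AF) => /(_ x y xA Rxy).
Qed.

Lemma derived_up_open A : derived up_open A = [set x | [exists y, (y \in A) && R x y]].
Proof.
apply/setP => x; rewrite /derived /tclosure !inE; apply/idP/idP.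
- move/forallP => H.
  pose U := x |: [set y | R x y].
  have Uo : up_open U.
    apply/up_openP => z y; rewrite !inE => /orP [/eqP ->|Rxz] Rzy;
    by rewrite ?Rzy ?(Rtr Rxz Rzy) orbT.
  have := H U; rewrite Uo !inE eqxx /= => /existsP [y /andP [yU]]; rewrite !inE => /andP [yx yA].
  by apply/existsP; exists y; rewrite yA /=; move: yU; rewrite !inE (negbTE yx).
- move=> /existsP [y /andP [yA Rxy]].
  apply/forallP => U; apply/implyP => /andP [/up_openP oU xU]; apply/existsP; exists y.
  rewrite (oU x y) // !inE yA andbT; apply: contraTneq Rxy => ->.
  by rewrite Rirr.
Qed.

Lemma up_open_scattered : scattered up_open.
Proof.
move=> S; rewrite derived_up_open => HS; apply/eqP; apply: contraT => /set0Pn [x xS].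
have nxS : ~ (x \notin S) by rewrite xS.
have [m [_ /negP/negPn mS Hm]] := strict_order_maximal (Q := fun z => z \notin S) Rtr Rirr nxS.
by move/subsetP: HS => /(_ m mS); rewrite inE => /existsP [y /andP [yS /Hm]]; rewrite yS.
Qed.

Lemma up_open_homeomorphism f :
  bijective f -> (forall w v, R w v = R (f w) (f v)) -> homeomorphism up_open f.
Proof.
move=> f_bij Rf; have [g fK gK] := f_bij; split=> //; split.
  move=> U /up_openP oU; apply/up_openP => x y; rewrite !inE => xU Rxy.
  by apply: (oU (f x)); rewrite // -Rf.
move=> U /up_openP oU; apply/up_openP => x y /imsetP [u uU ->] Rxy.
by rewrite -(gK y); apply: imset_f; apply: (oU u) => //; rewrite Rf gK.
Qed.
End UpsetTopology.

Lemma kvalid_dvalid (PV : Type) (phi : form PV) :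
  (forall (W : finType) (R : rel W) (f : W -> W), fin_inv_dyn_GL_frame R f -> kvalid R f phi) ->
  forall (X : finType) (op : pred {set X}) (f : X -> X),
    is_topology op -> scattered op -> homeomorphism op f -> dvalid op f phi.
Proof.
move=> Hvalid X op f Htop Hsc Hf nu; apply/setP => x; rewrite inE.
have X_gt0 : (0 < #|X|)%N by apply/card_gt0P; exists x.
apply/(@dsem_ksat _ _ _ f _ nu (fun p y => y \in nu p) (derived_spec Htop)) => //.
exact: Hvalid _ _ _ (spec_frame Htop Hsc X_gt0 Hf) _ _.
Qed.

Lemma dvalid_kvalid (PV : Type) (phi : form PV) :
  (forall (X : finType) (op : pred {set X}) (f : X -> X),
    is_topology op -> scattered op -> homeomorphism op f -> dvalid op f phi) ->
  forall (W : finType) (R : rel W) (f : W -> W), fin_inv_dyn_GL_frame R f -> kvalid R f phi.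
Proof.
move=> Hvalid W R f [_ [Rtr [Rirr [f_bij Rf]]]] V w.
pose nu p := [set y | V p y].
have HV p y : (y \in nu p) = V p y by rewrite inE.
apply/(dsem_ksat f (derived_up_open Rtr Rirr) HV).
by rewrite (Hvalid W _ f (up_open_topology R) (up_open_scattered Rtr Rirr)
  (up_open_homeomorphism f_bij Rf) nu) inE.
Qed.

Theorem mainTheorem10 (PV : Type) (PV_nonempty : inhabited PV) (phi : form PV) :
  (GLH phi <->
   (forall (W : finType) (R : rel W) (f : W -> W),
       fin_inv_dyn_GL_frame R f -> kvalid R f phi)) /\
  ((forall (W : finType) (R : rel W) (f : W -> W),
       fin_inv_dyn_GL_frame R f -> kvalid R f phi) <->
   (forall (X : finType) (op : pred {set X}) (f : X -> X),
       is_topology op -> scattered op -> homeomorphism op f -> dvalid op f phi)).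
Proof.
split; split.
- by move=> Hphi W R f HW; apply: GLH_sound.
- exact: GLH_complete.
- exact: kvalid_dvalid.
- exact: dvalid_kvalid.
Qed.
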